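(* Consider the inexact Bregman proximal point algorithm described in the context, with $\Phi$ Legendre, and define the ergodic iterates $\breve p^K=\big(\sum_{k=0}^K\sigma_kp^k\big)/\big(\sum_{k=0}^K\sigma_k\big)$. Let $z\in\operatorname{dom}T\cap\operatorname{dom}\Phi$. Then for every $w\in T(z)$ and every $K\ge0$, $$\langle w,\breve p^K-z\rangle\le\frac{D_\Phi(z,z^0)}{\sum_{k=0}^K\sigma_k}.$$
   Context: Let $\mathbb{E}$ be a finite-dimensional Euclidean space, $\Gamma_0(\mathbb{E})$ the proper lsc convex functions $\mathbb{E}\to\mathbb{R}\cup\{+\infty\}$. $\Phi\in\Gamma_0(\mathbb{E})$ is Legendre if it is essentially smooth ($\operatorname{int}\operatorname{dom}\Phi\ne\emptyset$, differentiable there, $\|\nabla\Phi(z^\nu)\|\to\infty$ whenever $\operatorname{int}\operatorname{dom}\Phi\ni z^\nu\to z\in\operatorname{bdry}\operatorname{dom}\Phi$) and essentially strictly convex (strictly convex on every convex subset of $\operatorname{dom}\partial\Phi$); then $\nabla\Phi:\operatorname{int}\operatorname{dom}\Phi\to\operatorname{int}\operatorname{dom}\Phi^*$ is a bijection with inverse $\nabla\Phi^*$. $D_\Phi(z_1,z_2)=\Phi(z_1)-\Phi(z_2)-\langle\nabla\Phi(z_2),z_1-z_2\rangle$ if $z_1\in\operatorname{dom}\Phi$, $z_2\in\operatorname{int}\operatorname{dom}\Phi$, and $+\infty$ otherwise. Let $T:\mathbb{E}\rightrightarrows\mathbb{E}$ be maximal monotone and assume $\operatorname{int}\operatorname{dom}\Phi\cap\operatorname{dom}T\ne\emptyset$.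 Inexact Bregman proximal point algorithm: given $z^0\in\operatorname{int}\operatorname{dom}\Phi$, step sizes $\sigma_k\ge\sigma>0$ and tolerances $\rho_k\in[0,1)$, it generates triples $(z^{k+1},p^k,w^k)$ with $p^k\in\operatorname{dom}\Phi$, $w^k\in T(p^k)$, $\nabla\Phi(z^k)-\sigma_kw^k\in\operatorname{int}\operatorname{dom}\Phi^*$, $z^{k+1}=\nabla\Phi^*(\nabla\Phi(z^k)-\sigma_kw^k)\in\operatorname{int}\operatorname{dom}\Phi$, and $D_\Phi(p^k,z^{k+1})\le\rho_kD_\Phi(p^k,z^k)$. *)

From HB Require Import structures.
From mathcomp Require Import all_boot all_order all_algebra.
From mathcomp Require Import all_classical all_reals all_analysis.
Set Implicit Arguments. Unset Strict Implicit. Unset Printing Implicit Defensive.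
Import Order.TTheory GRing.Theory Num.Theory.
Import numFieldNormedType.Exports.
Local Open Scope classical_set_scope.
Local Open Scope ring_scope.

Section Bregman.
Variables (R : realType) (n : nat).
Notation E := 'rV[R]_n.

Definition dot (u v : E) : R := \sum_(i < n) u ord0 i * v ord0 i.
Definition enorm (u : E) : R := Num.sqrt (dot u u).

Definition edom (f : E -> \bar R) : set E := [set x | (f x < +oo)%E].

Definition proper_fun (f : E -> \bar R) : Prop :=
  (exists x, (f x < +oo)%E) /\ (forall x, (-oo < f x)%E).
Definition lsc_fun (f : E -> \bar R) : Prop :=
  forall (x : E) (a : R), (a%:E < f x)%E -> \forall y \near x, (a%:E < f y)%E.
Definition convex_fun (f : E -> \bar R) : Prop :=
  forall (x y : E) (t : R), 0 < t < 1 ->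
    (f (t *: x + (1 - t) *: y)%R <= t%:E * f x + (1 - t)%:E * f y)%E.
Definition Gamma0 (f : E -> \bar R) : Prop :=
  proper_fun f /\ lsc_fun f /\ convex_fun f.

Definition grad (f : E -> \bar R) (x : E) : E :=
  \row_(i < n) ('d (fun y => fine (f y)) x (delta_mx ord0 i : E)).
Definition diff_at (f : E -> \bar R) (x : E) : Prop :=
  differentiable (fun y => fine (f y)) x.

Definition conj_fun (f : E -> \bar R) : E -> \bar R :=
  fun y => ereal_sup [set ((dot x y)%:E - f x)%E | x in [set: E]].

Definition subdiff (f : E -> \bar R) (x : E) : set E :=
  [set g | (f x < +oo)%E /\ forall y, (f x + (dot g (y - x)%R)%:E <= f y)%E].
Definition dom_subdiff (f : E -> \bar R) : set E := [set x | subdiff f x !=set0].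

Definition convex_set_E (C : set E) : Prop :=
  forall x y (t : R), C x -> C y -> 0 <= t <= 1 -> C (t *: x + (1 - t) *: y).
Definition strictly_convex_on (f : E -> \bar R) (C : set E) : Prop :=
  forall (x y : E) (t : R), C x -> C y -> x != y -> 0 < t < 1 ->
    (f (t *: x + (1 - t) *: y)%R < t%:E * f x + (1 - t)%:E * f y)%E.

Definition essentially_smooth (f : E -> \bar R) : Prop :=
  (interior (edom f) !=set0) /\
  (forall x, interior (edom f) x -> diff_at f x) /\
  (forall (z_ : nat -> E) (z : E),
      (forall k, interior (edom f) (z_ k)) ->
      z_ @ \oo --> z ->
      (closure (edom f) `\` interior (edom f)) z ->
      (fun k => enorm (grad f (z_ k))) @ \oo --> +oo).
Definition essentially_strictly_convex (f : E -> \bar R) : Prop :=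
  forall C, C `<=` dom_subdiff f -> convex_set_E C -> strictly_convex_on f C.
Definition Legendre (f : E -> \bar R) : Prop :=
  Gamma0 f /\ essentially_smooth f /\ essentially_strictly_convex f.

Definition bregman (f : E -> \bar R) (z1 z2 : E) : \bar R :=
  if `[< edom f z1 /\ interior (edom f) z2 >] then
    (f z1 - f z2 - (dot (grad f z2) (z1 - z2)%R)%:E)%E
  else +oo%E.

Definition dom_op (T : E -> set E) : set E := [set x | T x !=set0].
Definition monotone_op (T : E -> set E) : Prop :=
  forall x y u v, T x u -> T y v -> 0 <= dot (x - y) (u - v).
Definition maximal_monotone (T : E -> set E) : Prop :=
  monotone_op T /\
  forall S : E -> set E, monotone_op S -> (forall x, T x `<=` S x) ->
    forall x, S x = T x.

Definition ergodic (sigma : nat -> R) (p : nat -> E) (K : nat) : E :=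
  (\sum_(k < K.+1) sigma k)^-1 *: \sum_(k < K.+1) sigma k *: p k.

End Bregman.

(* Since Phi is Legendre, z^{k+1} = grad Phi^*(grad Phi(z^k) - sigma_k w^k) means
   grad Phi(z^{k+1}) = grad Phi(z^k) - sigma_k w^k.  From the definitions this needs
   Danskin's formula: for y in int dom Phi^* the supremum defining Phi^*(y) is attained
   (coercivity of Phi - <., y>) at a unique point u (essential strict convexity), and
   grad Phi^*(y) = u.  The four-point identity of the Bregman distance D then gives
   sigma_k <w^k, x - p^k> = D(x,z^{k+1}) - D(x,z^k) - D(p^k,z^{k+1}) + D(p^k,z^k);
   monotonicity of T replaces w^k by v, and the tolerance
   D(p^k,z^{k+1}) <= rho_k D(p^k,z^k) <= D(p^k,z^k) discards the last two terms.
   Summing telescopes to sum_k sigma_k <v, p^k - x> <= D(x,z^0); divide by sum_k sigma_k. *)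

From HB Require Import structures.
From mathcomp Require Import all_boot all_order all_algebra.
From mathcomp Require Import all_classical all_reals all_analysis.
From mathcomp Require Import ring lra.
Set Implicit Arguments. Unset Strict Implicit. Unset Printing Implicit Defensive.
Import Order.TTheory GRing.Theory Num.Theory.
Import numFieldNormedType.Exports.
Local Open Scope classical_set_scope.
Local Open Scope ring_scope.

Section Dot.
Variables (R : realType) (n : nat).
Local Notation E := 'rV[R]_n.

Lemma dotC (a b : E) : dot a b = dot b a.
Proof. by apply: eq_bigr => i _; rewrite mulrC. Qed.

Lemma dotDr (a b c : E) : dot a (b + c) = dot a b + dot a c.
Proof. by rewrite /dot -big_split; apply: eq_bigr => i _; rewrite mxE mulrDr. Qed.

Lemma dotZr (a b : E) (k : R) : dot a (k *: b) = k * dot a b.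
Proof. by rewrite /dot mulr_sumr; apply: eq_bigr => i _; rewrite mxE mulrCA. Qed.

Lemma dotNr (a b : E) : dot a (- b) = - dot a b.
Proof. by rewrite -scaleN1r dotZr mulN1r. Qed.

Lemma dotBr (a b c : E) : dot a (b - c) = dot a b - dot a c.
Proof. by rewrite dotDr dotNr. Qed.

Lemma dot_is_linear (a : E) : linear_for *:%R (dot a).
Proof. by move=> k x y; rewrite dotDr dotZr. Qed.

HB.instance Definition _ (a : E) :=
  GRing.isLinear.Build R E R *:%R (dot a) (dot_is_linear a).

Lemma dotDl (a b c : E) : dot (b + c) a = dot b a + dot c a.
Proof. by rewrite dotC dotDr !(dotC a). Qed.

Lemma dotZl (a b : E) (k : R) : dot (k *: b) a = k * dot b a.
Proof. by rewrite dotC dotZr dotC. Qed.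

Lemma dotNl (a b : E) : dot (- b) a = - dot b a.
Proof. by rewrite dotC dotNr dotC. Qed.

Lemma dotBl (a b c : E) : dot (b - c) a = dot b a - dot c a.
Proof. by rewrite dotC dotBr !(dotC a). Qed.

Lemma dot_deltar (a : E) i : dot a (delta_mx ord0 i) = a ord0 i.
Proof.
rewrite /dot (bigD1 i) //= big1 ?addr0; first by rewrite mxE !eqxx mulr1.
by move=> j /negbTE ji; rewrite mxE ji andbF mulr0.
Qed.

Lemma row_sum_delta (h : E) : h = \sum_i h ord0 i *: (delta_mx ord0 i : E).
Proof.
apply/rowP => j; rewrite summxE (bigD1 j) //= big1 ?addr0.
  by rewrite !mxE !eqxx mulr1.
by move=> i ij; rewrite !mxE [j == i]eq_sym (negbTE ij) andbF mulr0.
Qed.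

Lemma norm_row_coord_le (v : E) i : `|v ord0 i| <= `|v|.
Proof.
have /mapP[j Hj ->] : `|v ord0 i| \in [seq `|v x.1 x.2| | x : 'I_1 * 'I_n].
  by apply/mapP; exists (ord0, i) => //=; rewrite mem_enum.
by rewrite [leRHS]/Num.norm /= mx_normrE; apply/bigmax_geP; right => /=; exists j.
Qed.

Lemma norm_row_le (v : E) (M : R) :
  0 <= M -> (forall i, `|v ord0 i| <= M) -> `|v| <= M.
Proof.
move=> M0 hv; rewrite [leLHS]/Num.norm /= mx_normrE; apply/bigmax_leP; split => //.
by case=> i j _ /=; rewrite (ord1 i); exact: hv.
Qed.

Lemma norm_delta_le1 i : `|delta_mx ord0 i : E| <= 1.
Proof.
by apply: norm_row_le => // j; rewrite mxE; case: (_ && _); rewrite ?normr1 ?normr0.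
Qed.

Lemma dot_norm_le (a h : E) : `|dot a h| <= n%:R * `|a| * `|h|.
Proof.
apply: le_trans (ler_norm_sum _ _ _) _.
apply: le_trans (_ : \sum_(i < n) `|a| * `|h| <= _).
  by apply: ler_sum => i _; rewrite normrM; apply: ler_pM => //; exact: norm_row_coord_le.
by rewrite sumr_const card_ord -mulrA mulr_natl.
Qed.

Lemma dot_continuous (a : E) : continuous (dot a).
Proof.
move=> x; apply/(@cvgrPdist_le _ _ _ (nbhs x)) => e e0.
pose S := n%:R * `|a| + 1.
have S0 : 0 < S by rewrite ltr_pwDr // mulr_ge0.
apply/nbhs_ballP; exists (e / S); first by rewrite /= divr_gt0.
move=> y; rewrite -ball_normE /ball_ /= => /ltW xy.
rewrite -dotBr; apply: le_trans (dot_norm_le _ _) _.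
apply: le_trans (_ : S * `|x - y| <= e); last by rewrite -ler_pdivlMl // mulrC.
by rewrite ler_wpM2r // lerDl.
Qed.

Lemma dot_continuousl (b : E) : continuous (fun x : E => dot x b).
Proof.
rewrite (_ : (fun x => dot x b) = dot b); first exact: dot_continuous.
by apply/funext => x; exact: dotC.
Qed.

Lemma dot_ergodic_subr (sigma : nat -> R) (p : nat -> E) (v x : E) (K : nat) :
  \sum_(k < K.+1) sigma k != 0 ->
  dot v (ergodic sigma p K - x) =
    (\sum_(k < K.+1) sigma k)^-1 * \sum_(k < K.+1) sigma k * dot v (p k - x).
Proof.
move=> S_neq0; rewrite /ergodic dotBr dotZr linear_sum.
have -> : \sum_(k < K.+1) sigma k * dot v (p k - x) =
    \sum_(k < K.+1) sigma k * dot v (p k) - (\sum_(k < K.+1) sigma k) * dot v x.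
  by rewrite mulr_suml -sumrB; apply: eq_bigr => k _; rewrite dotBr mulrBr.
rewrite mulrBr mulrA mulVf // mul1r.
by congr (_ * _ - _); apply: eq_bigr => k _; exact: dotZr.
Qed.

End Dot.

Section Topology.
Variables (R : realType) (n : nat).
Local Notation E := 'rV[R]_n.

Lemma lsc_compact_le (f : E -> \bar R) (A : set E) (l : R) :
  lsc_fun f -> compact A ->
  (forall e, 0 < e -> exists x, A x /\ (f x < (l + e)%:E)%E) ->
  exists x, A x /\ (f x <= l%:E)%E.
Proof.
move=> f_lsc cA approx.
pose F := filter_from [set e : R | 0 < e]
  (fun e => A `&` [set x | (f x < (l + e)%:E)%E]).
have FF : ProperFilter F.
  apply: filter_from_proper.
    apply: filter_from_filter; first by exists 1%R => /=; exact: ltr01.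
    move=> i j /= i0 j0; exists (Order.min i j); first by rewrite lt_min i0.
    move=> x [Ax fx]; split; split => //; apply: (lt_le_trans fx);
      by rewrite lee_fin lerD2l ge_min lexx ?orbT.
  by move=> e /= e0; have [x [Ax fx]] := approx e e0; exists x.
have FA : F A by exists 1%R => /= [|x []//]; exact: ltr01.
have [x [Ax clx]] := cA F FF FA.
exists x; split => //; rewrite leNgt; apply/negP => lfx.
have [a [la afx]] : exists a : R, l < a /\ (a%:E < f x)%E.
  move: lfx; case: (f x) => [r|_|//].
    by rewrite lte_fin => lr; exists ((l + r) / 2); rewrite lte_fin; split; lra.
  by exists (l + 1); split; [lra | exact: ltry].
have FB : F (A `&` [set x | (f x < (l + (a - l))%:E)%E]).
  by exists (a - l) => //=; rewrite subr_gt0.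
have [y [[Ay fy] ay]] := clx _ _ FB (f_lsc x a afx).
by move: fy; rewrite addrC subrK => /lt_trans /(_ ay); rewrite ltxx.
Qed.

Lemma lsc_subr_continuous (f : E -> \bar R) (g : E -> R) :
  lsc_fun f -> continuous g -> lsc_fun (fun x => f x - (g x)%:E)%E.
Proof.
move=> f_lsc g_cont x a afx.
have [d [d0 hd]] : exists d, 0 < d /\ ((a + g x + d)%:E < f x)%E.
  move: afx; case: (f x) => [r| |] /=.
  - rewrite -EFinB lte_fin => ar; exists ((r - g x - a) / 2).
    by rewrite lte_fin; split; lra.
  - by move=> _; exists 1; split => //; exact: ltry.
  - by rewrite ltNge leNye.
have near_g : \forall y \near x, `|g x - g y| < d.
  exact: (cvgr_dist_lt _ _ (g_cont x) _ d0).
apply: filterS2 (f_lsc x _ hd) near_g => y.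
case: (f y) => [r| |] //=; last by move=> _ _; rewrite addye // ltry.
by rewrite -EFinB !lte_fin => h /ltr_normlP [h1 h2]; lra.
Qed.

Lemma sphere_compact (u : E) (r : R) : compact [set x : E | `|x - u| = r].
Proof.
apply: bounded_closed_compact.
  rewrite /= /bounded_near; near=> M => x /= xr.
  apply: le_trans (_ : `|x - u| + `|u| <= M).
    by rewrite -[x in leLHS](subrK u); apply: ler_normD.
  rewrite xr; near: M; apply: nbhs_pinfty_ge; exact: num_real.
have -> : [set x : E | `|x - u| = r] = (fun x => `|x - u|) @^-1` [set r] by [].
apply: preimage_closed; last exact: closed_eq.
move=> x _; apply: continuous_comp; last exact: norm_continuous.
by apply: continuousB; [exact: cvg_id | exact: cst_continuous].
Unshelve. all: by end_near. Qed.

Lemma closed_ball0_compact (M : R) : compact [set x : E | `|x| <= M].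
Proof.
apply: bounded_closed_compact.
  rewrite /= /bounded_near; near=> N => x /= xr.
  apply: le_trans xr _; near: N; apply: nbhs_pinfty_ge; exact: num_real.
have -> : [set x : E | `|x| <= M] = (fun x => `|x|) @^-1` [set r | r <= M] by [].
apply: preimage_closed; last exact: closed_le.
by move=> x _; exact: norm_continuous.
Unshelve. all: by end_near. Qed.

End Topology.

Section Differential.
Variables (R : realType) (n : nat).
Local Notation E := 'rV[R]_n.

Lemma diff_slope_cvg (g : E -> R) (u h : E) : differentiable g u ->
  (fun t : R => t^-1 * (g (u + t *: h) - g u)) @ 0^'+ --> 'd g u h.
Proof.
move=> dg; rewrite -deriveE //.
have -> : (fun t : R => t^-1 * (g (u + t *: h) - g u)) =
          (fun t : R => t^-1 *: (g (t *: h + u) - g u)).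
  by apply: funext => t; rewrite [u + _]addrC.
have dgh : derivable g u h by exact: diff_derivable.
apply: cvg_trans; last exact: dgh.
apply: cvg_app.
by apply: within_subset => t /= t0; exact: lt0r_neq0.
Qed.

Lemma diff_le_slope (g : E -> R) (u h : E) (c d : R) : 0 < d ->
  differentiable g u ->
  (forall t, 0 < t < d -> g (u + t *: h) - g u <= t * c) ->
  'd g u h <= c.
Proof.
move=> d0 dg slope_le; apply: (cvgr_to_le (diff_slope_cvg (h := h) dg)); near=> t.
have t0 : 0 < t by near: t; exact: nbhs_right_gt.
have td : t < d by near: t; exact: nbhs_right_lt.
by rewrite ler_pdivrMl // slope_le // t0.
Unshelve. all: by end_near. Qed.

Lemma diff_ge_slope (g : E -> R) (u h : E) (c d : R) : 0 < d ->
  differentiable g u ->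
  (forall t, 0 < t < d -> t * c <= g (u + t *: h) - g u) ->
  c <= 'd g u h.
Proof.
move=> d0 dg slope_ge; apply: (cvgr_to_ge (diff_slope_cvg (h := h) dg)); near=> t.
have t0 : 0 < t by near: t; exact: nbhs_right_gt.
have td : t < d by near: t; exact: nbhs_right_lt.
by rewrite ler_pdivlMl // slope_ge // t0.
Unshelve. all: by end_near. Qed.

Lemma diff_dot_unique (f : E -> R) (x u : E) :
  (forall eps, 0 < eps -> \forall h \near (0 : E),
      `|f (h + x) - f x - dot u h| <= eps * `|h|) ->
  'd f x = dot u :> (E -> R).
Proof.
move=> approx; apply: diff_unique; first exact: dot_continuous.
by apply/eqaddoP => eps eps0; apply: filterS (approx eps eps0) => h; rewrite /= opprD addrA.
Qed.

Lemma dot_grad (f : E -> \bar R) (z h : E) :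
  dot (grad f z) h = 'd (fun y => fine (f y)) z h.
Proof.
rewrite [in RHS](row_sum_delta h) linear_sum /dot; apply: eq_bigr => i _.
by rewrite linearZ mxE mulrC.
Qed.

End Differential.

Section Conjugate.
Variables (R : realType) (n : nat) (Phi : 'rV[R]_n -> \bar R).
Local Notation E := 'rV[R]_n.
Local Notation phi x := (fine (Phi x)).
Local Notation Phis := (conj_fun Phi).
(* Fenchel-Young gap; it vanishes exactly where the sup defining [Phis y] is attained. *)
Local Notation fy_gap y x := (phi x - dot x y + fine (Phis y)).
Hypothesis Phi_gtNy : forall x, (-oo < Phi x)%E.
Hypothesis edom_Phi_neq0 : exists x0, edom Phi x0.
Hypothesis Phi_lsc : lsc_fun Phi.
Hypothesis Phi_convex : convex_fun Phi.
Hypothesis Phi_esc : essentially_strictly_convex Phi.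

Lemma edom_fineK x : edom Phi x -> Phi x = (phi x)%:E.
Proof.
by move=> hx; rewrite fineK // fin_numE (gt_eqF (Phi_gtNy x)) (lt_eqF hx).
Qed.

Lemma notin_edom x : ~ edom Phi x -> Phi x = +oo%E.
Proof.
by move=> hx; move: (Phi_gtNy x) hx; rewrite /edom /=; case: (Phi x) => // r; rewrite ltry.
Qed.

Lemma convex_fine x y t : edom Phi x -> edom Phi y -> 0 < t < 1 ->
  edom Phi (t *: x + (1 - t) *: y) /\
  phi (t *: x + (1 - t) *: y) <= t * phi x + (1 - t) * phi y.
Proof.
move=> hx hy t01; have := @Phi_convex x y t t01.
rewrite (edom_fineK hx) (edom_fineK hy) -!EFinM -EFinD => hle.
have hz : edom Phi (t *: x + (1 - t) *: y) by apply: le_lt_trans hle _; exact: ltry.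
by split => //; move: hle; rewrite (edom_fineK hz) lee_fin.
Qed.

Lemma strictly_convex_fine (C : set E) x y t : strictly_convex_on Phi C ->
  C x -> C y -> x != y -> edom Phi x -> edom Phi y -> 0 < t < 1 ->
  edom Phi (t *: x + (1 - t) *: y) /\
  phi (t *: x + (1 - t) *: y) < t * phi x + (1 - t) * phi y.
Proof.
move=> scvx Cx Cy xy hx hy t01; have := scvx x y t Cx Cy xy t01.
rewrite (edom_fineK hx) (edom_fineK hy) -!EFinM -EFinD => hlt.
have hz : edom Phi (t *: x + (1 - t) *: y) by apply: lt_trans hlt _; exact: ltry.
by split => //; move: hlt; rewrite (edom_fineK hz) lte_fin.
Qed.

Lemma conj_fun_ge x y : edom Phi x -> ((dot x y - phi x)%:E <= Phis y)%E.
Proof.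
by move=> hx; apply: ereal_sup_ubound; exists x => //; rewrite (edom_fineK hx) EFinB.
Qed.

Lemma conj_fun_le y (b : \bar R) :
  (forall x, edom Phi x -> ((dot x y - phi x)%:E <= b)%E) -> (Phis y <= b)%E.
Proof.
move=> hb; apply: ge_ereal_sup => _ [x _ <-].
have [hx|hx] := pselect (edom Phi x); first by rewrite (edom_fineK hx) -EFinB; exact: hb.
by rewrite (notin_edom hx) addeNy leNye.
Qed.

Lemma conj_fun_fineK y : edom Phis y -> Phis y = (fine (Phis y))%:E.
Proof.
move=> hy; have [x0 hx0] := edom_Phi_neq0; have h := conj_fun_ge y hx0.
rewrite fineK // fin_numE -ltey hy andbT.
by apply: contraTN h => /eqP ->; rewrite leeNy_eq.
Qed.

Lemma fenchel_young x y : edom Phis y -> edom Phi x ->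
  dot x y - phi x <= fine (Phis y).
Proof. by move=> hy hx; rewrite -lee_fin -conj_fun_fineK //; exact: conj_fun_ge. Qed.

Lemma conj_fun_approx y e : edom Phis y -> 0 < e ->
  exists x, edom Phi x /\ fine (Phis y) - e < dot x y - phi x.
Proof.
move=> hy e0.
have : ((fine (Phis y) - e)%:E < Phis y)%E.
  by rewrite [X in (_ < X)%E]conj_fun_fineK // lte_fin; lra.
move=> /ereal_sup_gt [_ [x _ <-]] hlt.
have hx : edom Phi x.
  rewrite /edom /= ltey; apply: contraTN hlt => /eqP ->.
  by rewrite addeNy -leNgt leNye.
by exists x; split => //; move: hlt; rewrite (edom_fineK hx) -EFinB lte_fin.
Qed.

Lemma fy_gap_ge0 y x : edom Phis y -> edom Phi x -> 0 <= fy_gap y x.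
Proof. by move=> hy hx; have := fenchel_young hy hx; lra. Qed.

(* Fenchel-Young at the 2n points [y +- c e_i] of dom Phi^* bounds each |x_i|. *)
Lemma fy_gap_coercive y : interior (edom Phis) y ->
  exists c C, 0 < c /\ forall x, edom Phi x -> c * `|x| <= phi x - dot x y + C.
Proof.
move=> /nbhs_ballP [eps /= eps0 yball].
have hy : edom Phis y by apply: yball; exact: ballxx.
pose c := eps / 2; have c0 : 0 < c by rewrite divr_gt0.
pose pt (q : 'I_n * bool) : E := y + (if q.2 then c else - c) *: delta_mx ord0 q.1.
have hpt q : edom Phis (pt q).
  apply: yball; rewrite -ball_normE /ball_ /= opprD addrA subrr add0r normrN normrZ.
  apply: le_lt_trans (_ : `|(if q.2 then c else - c)| * 1 < eps).
    by apply: ler_wpM2l => //; exact: norm_delta_le1.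
  by rewrite mulr1; case: q.2; rewrite ?normrN gtr0_norm // /c; lra.
pose C := \sum_q `|fine (Phis (pt q))| + `|fine (Phis y)|.
have fy_pt q x : edom Phi x -> dot x (pt q) - phi x <= C.
  move=> hx; apply: le_trans (fenchel_young (hpt q) hx) _.
  apply: le_trans (ler_norm _) _; rewrite /C (bigD1 q) //= -addrA lerDl.
  by apply: addr_ge0 => //; apply: sumr_ge0.
exists c, C; split => // x hx.
have gap0 : 0 <= phi x - dot x y + C.
  have := fy_gap_ge0 hy hx; have := ler_norm (fine (Phis y)).
  have : 0 <= \sum_q `|fine (Phis (pt q))| by apply: sumr_ge0.
  rewrite /C; lra.
rewrite -ler_pdivlMl // mulrC; apply: norm_row_le.
  by apply: divr_ge0 => //; exact: ltW.
move=> i; rewrite ler_pdivlMr // mulrC.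
have := fy_pt (i, true) x hx; have := fy_pt (i, false) x hx.
rewrite /pt /= !dotDr !dotZr !dot_deltar.
by case: (ler0P (x ord0 i)) => xi; lra.
Qed.

Lemma conj_fun_attained y : interior (edom Phis) y ->
  exists u, edom Phi u /\ fy_gap y u = 0.
Proof.
move=> yint; have hy : edom Phis y by exact: nbhs_singleton yint.
have [c [C [c0 coer]]] := fy_gap_coercive yint.
pose s := fine (Phis y); pose M := (C - s + 1) / c.
have approx e : 0 < e -> exists x, `|x| <= M /\ (Phi x - (dot x y)%:E < (- s + e)%:E)%E.
  move=> e0; have e10 : 0 < Order.min e 1 by rewrite lt_min e0 ltr01.
  have [x [hx hlt]] := conj_fun_approx hy e10; rewrite -/s in hlt.
  have mine : Order.min e 1 <= e by rewrite ge_min lexx.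
  have min1 : Order.min e 1 <= 1 by rewrite ge_min lexx orbT.
  exists x; split; last by rewrite (edom_fineK hx) -EFinB lte_fin; lra.
  by have := coer x hx; rewrite /M ler_pdivlMr // mulrC; lra.
have [u [_ hu]] := lsc_compact_le (lsc_subr_continuous Phi_lsc (dot_continuousl (b := y)))
  (closed_ball0_compact (M := M)) approx.
have du : edom Phi u.
  by rewrite /edom /= ltey; apply: contraTN hu => /eqP ->.
exists u; split => //; move: hu; rewrite (edom_fineK du) -EFinB lee_fin.
by have := fy_gap_ge0 hy du; rewrite -/s; lra.
Qed.

(* The points with zero gap have y as a subgradient, so Phi is strictly convex on them. *)
Lemma conj_fun_argmin_unique y u u' : edom Phis y ->
  edom Phi u -> edom Phi u' -> fy_gap y u = 0 -> fy_gap y u' = 0 -> u = u'.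
Proof.
move=> hy du du' gapu gapu'.
pose Ms := [set x | edom Phi x /\ fy_gap y x <= 0].
have Ms_subdiff : Ms `<=` dom_subdiff Phi.
  move=> x [dx gapx]; exists y; split => // x'.
  have [dx'|dx'] := pselect (edom Phi x'); last by rewrite (notin_edom dx') leey.
  rewrite (edom_fineK dx') (edom_fineK dx) -EFinD lee_fin dotBr !(dotC y).
  by have := fy_gap_ge0 hy dx'; lra.
have Ms_convex : convex_set_E Ms.
  move=> a b t [da gapa] [db gapb] /andP [t0 t1].
  have [->|tn0] := eqVneq t 0; first by rewrite scale0r add0r subr0 scale1r.
  have [->|tn1] := eqVneq t 1; first by rewrite scale1r subrr scale0r addr0.
  have t01 : 0 < t < 1 by rewrite !lt_def tn0 t0 eq_sym tn1 t1.
  have [dz phiz] := convex_fine da db t01.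
  split => //; rewrite dotDl !dotZl.
  have : t * fy_gap y a <= 0 by rewrite mulr_ge0_le0.
  have : (1 - t) * fy_gap y b <= 0 by rewrite mulr_ge0_le0 // subr_ge0.
  lra.
apply: contrapT => /eqP uu'.
have half : 0 < (2^-1 : R) < 1 by rewrite invr_gt0 ltr0n /= invf_lt1 // ltr1n.
have Msu : Ms u by split => //; rewrite gapu.
have Msu' : Ms u' by split => //; rewrite gapu'.
have [dz phiz] :=
  strictly_convex_fine (Phi_esc Ms_subdiff Ms_convex) Msu Msu' uu' du du' half.
have := fy_gap_ge0 hy dz; rewrite dotDl !dotZl; lra.
Qed.

Lemma fy_gap_sphere_pos y u r : edom Phis y -> edom Phi u -> fy_gap y u = 0 -> 0 < r ->
  exists2 mu, 0 < mu & forall x, `|x - u| = r -> edom Phi x -> mu <= fy_gap y x.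
Proof.
move=> hy du gapu r0; pose s := fine (Phis y).
apply: contrapT => no_mu.
have approx e : 0 < e -> exists x, `|x - u| = r /\ (Phi x - (dot x y)%:E < (- s + e)%:E)%E.
  move=> e0; apply: contrapT => no_x; apply: no_mu; exists e => // x xr dx.
  rewrite leNgt; apply/negP => lt_e; apply: no_x; exists x; split => //.
  by rewrite (edom_fineK dx) -EFinB lte_fin /s; lra.
have [x [xr gx]] := lsc_compact_le (lsc_subr_continuous Phi_lsc (dot_continuousl (b := y)))
  (sphere_compact (u := u) (r := r)) approx.
have dx : edom Phi x by rewrite /edom /= ltey; apply: contraTN gx => /eqP ->.
have gapx : fy_gap y x = 0.
  move: gx; rewrite (edom_fineK dx) -EFinB lee_fin.
  by have := fy_gap_ge0 hy dx; rewrite -/s; lra.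
by move: xr; rewrite (conj_fun_argmin_unique hy dx du gapx gapu) /= subrr normr0; lra.
Qed.

(* Convexity along the segment from u to x transfers the bound from the sphere. *)
Lemma fy_gap_growth y u r mu x : fy_gap y u = 0 -> 0 < r ->
  (forall x, `|x - u| = r -> edom Phi x -> mu <= fy_gap y x) ->
  edom Phi u -> edom Phi x -> r < `|x - u| -> mu * `|x - u| <= r * fy_gap y x.
Proof.
move=> gapu r0 sphere du dx xr.
have xu0 : 0 < `|x - u| by apply: lt_trans xr.
pose lam := r / `|x - u|.
have lam01 : 0 < lam < 1 by rewrite divr_gt0 //= ltr_pdivrMr // mul1r.
have [dz phiz] := convex_fine dx du lam01.
have zu : `|lam *: x + (1 - lam) *: u - u| = r.
  rewrite scalerBl scale1r [u - _]addrC addrA addrK -scalerBr normrZ gtr0_norm; last by case/andP: lam01.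
  by rewrite divfK // gt_eqF.
have := sphere _ zu dz; rewrite dotDl !dotZl => hmu.
rewrite -ler_pdivlMr // mulrAC -/lam.
have : lam * fy_gap y x + (1 - lam) * fy_gap y u <= fy_gap y x * lam.
  by rewrite gapu mulr0 addr0 mulrC.
lra.
Qed.

(* Phis (y + h) - Phis y is a sup over x of <x - u, h> - fy_gap y x: the first term is
   small for x near u, and beyond the sphere of radius r the gap grows linearly. *)
Lemma conj_fun_diff_approx y u eta : interior (edom Phis) y -> edom Phi u ->
  fy_gap y u = 0 -> 0 < eta ->
  \forall h \near (0 : E), `|fine (Phis (h + y)) - fine (Phis y) - dot u h| <= eta * `|h|.
Proof.
move=> yint du gapu eta0; have hy : edom Phis y by exact: nbhs_singleton yint.
move: (yint) => /nbhs_ballP [eps /= eps0 yball].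
pose N : R := n%:R + 1; have N0 : 0 < N by rewrite ltr_pwDr.
pose r := eta / N; have r0 : 0 < r by rewrite divr_gt0.
have [mu mu0 sphere] := fy_gap_sphere_pos hy du gapu r0.
have d0 : 0 < Order.min eps (mu / (r * N)) by rewrite lt_min eps0 /= divr_gt0 // mulr_gt0.
apply/nbhs_ballP; exists (Order.min eps (mu / (r * N))) => // h.
rewrite -ball_normE /ball_ /= sub0r normrN lt_min => /andP [h_eps h_mu].
have dyh : edom Phis (h + y).
  by apply: yball; rewrite -ball_normE /ball_ /= opprD addrCA subrr addr0 normrN.
have lower := fenchel_young dyh du.
rewrite dotDr in lower.
have upper : fine (Phis (h + y)) <= fine (Phis y) + dot u h + eta * `|h|.
  rewrite -lee_fin -conj_fun_fineK //; apply: conj_fun_le => // x dx.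
  rewrite lee_fin dotDr (dotC x h) (dotC u h).
  have gapx := fy_gap_ge0 hy dx.
  have dot_le : dot h (x - u) <= N * `|x - u| * `|h|.
    apply: le_trans (ler_norm _) _; apply: le_trans (dot_norm_le _ _) _.
    by rewrite mulrAC ler_wpM2r // ler_wpM2r // lerDl.
  suff : dot h (x - u) - fy_gap y x <= eta * `|h| by rewrite dotBr; lra.
  have [xr|xr] := leP `|x - u| r.
    have : N * `|x - u| * `|h| <= eta * `|h|.
      by rewrite ler_wpM2r // -ler_pdivlMl // mulrC.
    lra.
  have growth := fy_gap_growth gapu r0 sphere du dx xr.
  have hNr : `|h| * (r * N) <= mu.
    by rewrite -ler_pdivlMr ?mulr_gt0 ?invr_gt0 //; exact: ltW h_mu.
  have : N * `|x - u| * `|h| <= fy_gap y x.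
    rewrite -(ler_pM2r r0) (_ : _ * r = `|h| * (r * N) * `|x - u|); last by ring.
    by apply: le_trans (_ : _ <= mu * `|x - u|) _; [exact: ler_wpM2r | rewrite [_ * r]mulrC].
  have : 0 <= eta * `|h| by rewrite mulr_ge0 // ltW.
  lra.
rewrite ger0_norm; lra.
Qed.

Lemma grad_eq_subgradient u y : interior (edom Phi) u -> diff_at Phi u ->
  subdiff Phi u y -> grad Phi u = y.
Proof.
move=> uint du [Phiu_lty subgrad].
move: (uint) => /nbhs_ballP [eps /= eps0 uball].
have dot_le_diff h : dot y h <= 'd (fun x => phi x) u h.
  apply: (@diff_ge_slope _ _ _ _ _ _ (eps / (`|h| + 1))) => //.
    by rewrite divr_gt0 // ltr_pwDr.
  move=> t /andP [t0 td].
  have dth : edom Phi (u + t *: h).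
    apply: uball; rewrite -ball_normE /ball_ /= opprD addrA subrr sub0r normrN normrZ.
    rewrite gtr0_norm //; move: td; rewrite ltr_pdivlMr ?ltr_pwDr // => td.
    by apply: le_lt_trans td; rewrite mulrDr mulr1 lerDl ltW.
  have := subgrad (u + t *: h).
  rewrite (edom_fineK dth) (edom_fineK Phiu_lty) -EFinD lee_fin.
  by rewrite addrAC subrr add0r dotZr; lra.
apply/rowP => i; rewrite mxE; apply/eqP; rewrite eq_le; apply/andP; split.
  by have := dot_le_diff (- delta_mx ord0 i); rewrite !linearN /= dot_deltar; lra.
by have := dot_le_diff (delta_mx ord0 i); rewrite dot_deltar.
Qed.

Lemma subdiff_grad_conj_fun y : interior (edom Phis) y ->
  edom Phi (grad Phis y) /\ subdiff Phi (grad Phis y) y.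
Proof.
move=> yint; have hy : edom Phis y by exact: nbhs_singleton yint.
have [u [du gapu]] := conj_fun_attained yint.
have diff_conj : 'd (fun y' => fine (Phis y')) y = dot u :> (E -> R).
  apply: diff_dot_unique => eps eps0.
  by have := conj_fun_diff_approx yint du gapu eps0.
have -> : grad Phis y = u.
  by apply/rowP => i; rewrite mxE diff_conj dot_deltar.
split => //; split => // x.
have [dx|dx] := pselect (edom Phi x); last by rewrite (notin_edom dx) leey.
rewrite (edom_fineK dx) (edom_fineK du) -EFinD lee_fin dotBr !(dotC y).
by have := fenchel_young hy dx; lra.
Qed.

End Conjugate.

Section Bregman.
Variables (R : realType) (n : nat) (Phi : 'rV[R]_n -> \bar R).
Local Notation E := 'rV[R]_n.
Local Notation phi x := (fine (Phi x)).
Hypothesis Phi_gtNy : forall x, (-oo < Phi x)%E.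
Hypothesis Phi_convex : convex_fun Phi.

Definition bregman_fine (a b : E) : R := phi a - phi b - dot (grad Phi b) (a - b).

Lemma bregmanE a b :
  edom Phi a -> interior (edom Phi) b -> bregman Phi a b = (bregman_fine a b)%:E.
Proof.
move=> da bint; rewrite /bregman asboolT //.
by rewrite (edom_fineK Phi_gtNy da) (edom_fineK Phi_gtNy (nbhs_singleton bint)) -!EFinB.
Qed.

Lemma bregman_fine_four_point a a' b b' :
  bregman_fine a b' - bregman_fine a b - (bregman_fine a' b' - bregman_fine a' b) =
  dot (grad Phi b' - grad Phi b) (a' - a).
Proof.
(* Abstracting the gradients keeps the rewrites below from unfolding [grad]. *)
rewrite /bregman_fine; move: (grad Phi b) (grad Phi b') => g g'.
by rewrite !dotBl !dotBr; ring.
Qed.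

Lemma bregman_fine_ge0 a b :
  interior (edom Phi) b -> diff_at Phi b -> edom Phi a -> 0 <= bregman_fine a b.
Proof.
move=> bint db da; have dbb := nbhs_singleton bint.
rewrite /bregman_fine dot_grad subr_ge0.
apply: (@diff_le_slope _ _ _ _ _ _ 1) => // t /andP [t0 t1].
have -> : b + t *: (a - b) = t *: a + (1 - t) *: b.
  by rewrite scalerBr scalerBl scale1r addrCA addrA.
have t01 : 0 < t < 1 by rewrite t0.
by have [_] := convex_fine Phi_gtNy Phi_convex da dbb t01; lra.
Qed.

End Bregman.

Section InexactBregmanProximalPoint.
Variables (R : realType) (n : nat) (Phi : 'rV[R]_n -> \bar R) (T : 'rV[R]_n -> set 'rV[R]_n).
Variables (z p w : nat -> 'rV[R]_n) (sigma rho : nat -> R).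
Local Notation D := (bregman_fine Phi).
Hypothesis Phi_gtNy : forall x, (-oo < Phi x)%E.
Hypothesis edom_Phi_neq0 : exists x0, edom Phi x0.
Hypothesis Phi_lsc : lsc_fun Phi.
Hypothesis Phi_convex : convex_fun Phi.
Hypothesis Phi_esc : essentially_strictly_convex Phi.
Hypothesis Phi_diff : forall x, interior (edom Phi) x -> diff_at Phi x.
Hypothesis T_monotone : monotone_op T.
Hypothesis z_int : forall k, interior (edom Phi) (z k).
Hypothesis sigma_ge0 : forall k, 0 <= sigma k.
Hypothesis rho_le1 : forall k, rho k <= 1.
Hypothesis p_dom : forall k, edom Phi (p k).
Hypothesis w_T : forall k, T (p k) (w k).
Hypothesis step_int :
  forall k, interior (edom (conj_fun Phi)) (grad Phi (z k) - sigma k *: w k).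
Hypothesis z_next :
  forall k, z k.+1 = grad (conj_fun Phi) (grad Phi (z k) - sigma k *: w k).
Hypothesis bregman_tol :
  forall k, (bregman Phi (p k) (z k.+1) <= (rho k)%:E * bregman Phi (p k) (z k))%E.

Lemma grad_z_next k : grad Phi (z k.+1) = grad Phi (z k) - sigma k *: w k.
Proof.
have [_ subgrad] := subdiff_grad_conj_fun Phi_gtNy edom_Phi_neq0 Phi_lsc Phi_convex Phi_esc
  (step_int k).
have zint := z_int k.+1; rewrite z_next in zint *.
by apply: grad_eq_subgradient => //; exact: Phi_diff.
Qed.

Lemma bpp_step_le k x v : edom Phi x -> T x v ->
  sigma k * dot v (p k - x) <= D x (z k) - D x (z k.+1).
Proof.
move=> dx Txv.
have D_ge0 a j : edom Phi a -> 0 <= D a (z j).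
  by move=> da; apply: bregman_fine_ge0 => //; exact: Phi_diff.
have tol : D (p k) (z k.+1) <= rho k * D (p k) (z k).
  by have := bregman_tol k; rewrite !bregmanE // -EFinM lee_fin.
have rho_tol : rho k * D (p k) (z k) <= D (p k) (z k) by rewrite ler_piMl ?D_ge0.
have four := bregman_fine_four_point Phi x (p k) (z k) (z k.+1).
rewrite grad_z_next [_ - _ - grad Phi (z k)]addrAC subrr add0r dotNl dotZl in four.
have mono : 0 <= dot (p k - x) (w k - v) := T_monotone (w_T k) Txv.
rewrite dotBr !(dotC (p k - x)) in mono.
have : 0 <= sigma k * (dot (w k) (p k - x) - dot v (p k - x)) by rewrite mulr_ge0.
lra.
Qed.

Lemma bpp_sum_le K x v : edom Phi x -> T x v ->
  \sum_(k < K.+1) sigma k * dot v (p k - x) <= D x (z 0) - D x (z K.+1).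
Proof.
move=> dx Txv; elim: K => [|K IH]; first by rewrite big_ord1; exact: bpp_step_le.
by rewrite big_ord_recr /=; have := bpp_step_le K.+1 dx Txv; lra.
Qed.

End InexactBregmanProximalPoint.

Theorem mainTheorem10 (R : realType) (n : nat)
  (Phi : 'rV[R]_n -> \bar R) (T : 'rV[R]_n -> set 'rV[R]_n)
  (z p w : nat -> 'rV[R]_n) (sigma rho : nat -> R) (sigma_min : R) :
  Legendre Phi ->
  maximal_monotone T ->
  interior (edom Phi) `&` dom_op T !=set0 ->
  interior (edom Phi) (z 0%N) ->
  0 < sigma_min ->
  (forall k, sigma_min <= sigma k) ->
  (forall k, 0 <= rho k < 1) ->
  (forall k, edom Phi (p k)) ->
  (forall k, T (p k) (w k)) ->
  (forall k, interior (edom (conj_fun Phi)) (grad Phi (z k) - sigma k *: w k)) ->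
  (forall k, z k.+1 = grad (conj_fun Phi) (grad Phi (z k) - sigma k *: w k)) ->
  (forall k, interior (edom Phi) (z k.+1)) ->
  (forall k, (bregman Phi (p k) (z k.+1) <= (rho k)%:E * bregman Phi (p k) (z k))%E) ->
  forall x : 'rV[R]_n, dom_op T x -> edom Phi x ->
  forall v : 'rV[R]_n, T x v ->
  forall K : nat,
    ((dot v (ergodic sigma p K - x))%:E
       <= bregman Phi x (z 0%N) * ((\sum_(k < K.+1) sigma k)^-1)%:E)%E.
Proof.
move=> [[[[x0 dx0] Phi_gtNy] [Phi_lsc Phi_convex]] [[_ [Phi_diff _]] Phi_esc]] [T_mono _] _
  z0_int sigma_min_gt0 sigma_ge_min rho01 p_dom w_T step_int z_next z_next_int
  tol x _ dx v Txv K.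
have z_int k : interior (edom Phi) (z k) by case: k.
have sigma_ge0 k : 0 <= sigma k by apply: le_trans (ltW sigma_min_gt0) _.
have rho_le1 k : rho k <= 1 by case/andP: (rho01 k) => _ /ltW.
have S_gt0 : 0 < \sum_(k < K.+1) sigma k.
  rewrite big_ord_recl ltr_wpDr ?sumr_ge0 //.
  exact: lt_le_trans sigma_min_gt0 (sigma_ge_min 0).
have sum_le := bpp_sum_le Phi_gtNy (ex_intro _ x0 dx0) Phi_lsc Phi_convex Phi_esc Phi_diff
  T_mono z_int sigma_ge0 rho_le1 p_dom w_T step_int z_next tol K dx Txv.
have D_ge0 : 0 <= bregman_fine Phi x (z K.+1).
  by apply: bregman_fine_ge0 => //; exact: Phi_diff.
rewrite bregmanE // -EFinM lee_fin dot_ergodic_subr ?gt_eqF // mulrC.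
by apply: ler_wpM2r; [rewrite invr_ge0 ltW | lra].
Qed.
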